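(* Let $m=p_1^{\alpha_1}p_2^{\alpha_2}$, where $p_1,p_2>2$ are distinct primes and $\alpha_1,\alpha_2$ are positive integers. Let $t=\mathrm{ord}_m(2)$ and let $\gamma\in\mathbb{F}_{2^t}^*$ be a primitive $m$th root of unity. Let $E=\{e\in\mathbb{Z}: p_1^{\alpha_1}\nmid e,\ p_2^{\alpha_2}\nmid e\}$. Then $m$ is good if and only if there exist $u,v\in E$ with $u\not\equiv v\pmod m$ and $\det(A)=0$, where $$A=\begin{pmatrix}\gamma^{s_{01}u}&\gamma^{s_{01}v}&1\\ \gamma^{s_{10}u}&\gamma^{s_{10}v}&1\\ \gamma^{u}&\gamma^{v}&1\end{pmatrix}.$$
   Context: $\mathrm{ord}_m(2)$ is the multiplicative order of $2$ modulo $m$. The canonical set of $m$ is $S_m=\{s_{01},s_{10},s_{11}\}\subseteq\mathbb{Z}_m$, where for $\sigma=(\sigma_1,\sigma_2)\in\{0,1\}^2\setminus\{(0,0)\}$, $s_\sigma$ is the unique element of $\mathbb{Z}_m$ with $s_\sigma\equiv\sigma_1 \pmod{p_1^{\alpha_1}}$ and $s_\sigma\equiv \sigma_2\pmod{p_2^{\alpha_2}}$ (so $s_{11}=1$). An $S_m$-decoding polynomial is a polynomial $P(X)\in\mathbb{F}_{2^t}[X]$ such that $P(\gamma^s)=0$ for every $s\in S_m$ and $P(1)=1$. The number $m$ is called good if there exists an $S_m$-decoding polynomial with fewer than $4$ monomials (nonzero terms). *)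

From HB Require Import structures.
From mathcomp Require Import all_boot all_order all_algebra.
Set Implicit Arguments. Unset Strict Implicit. Unset Printing Implicit Defensive.
Import GRing.Theory Num.Theory.
Local Open Scope ring_scope.

Definition is_ord_mod (m a t : nat) : Prop :=
  (0 < t)%N /\ (a ^ t = 1 %[mod m])%N /\
  (forall k : nat, (0 < k)%N -> (a ^ k = 1 %[mod m])%N -> (t <= k)%N).

(* s_sigma for m = q1 * q2 (q1 = p1^a1, q2 = p2^a2 coprime): the unique
   element of Z_m (represented in [0, m)) congruent to r1 mod q1 and r2 mod q2 *)
Definition s_sig (q1 q2 r1 r2 : nat) : nat := (chinese q1 q2 r1 r2 %% (q1 * q2))%N.

Definition canon_set (q1 q2 : nat) : seq nat :=
  [:: s_sig q1 q2 0 1; s_sig q1 q2 1 0; s_sig q1 q2 1 1].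

Definition nmonomials (F : fieldType) (P : {poly F}) : nat :=
  count (fun c => c != 0) (polyseq P).

Definition decoding_poly (F : fieldType) (gamma : F) (q1 q2 : nat) (P : {poly F}) : Prop :=
  (forall s, s \in canon_set q1 q2 -> P.[gamma ^+ s] = 0) /\ P.[1] = 1.

Definition good (F : fieldType) (gamma : F) (q1 q2 : nat) : Prop :=
  exists P : {poly F}, decoding_poly gamma q1 q2 P /\ (nmonomials P < 4)%N.

Definition matA (F : fieldType) (gamma : F) (q1 q2 : nat) (u v : int) : 'M[F]_3 :=
  \matrix_(i < 3, j < 3)
    (let s := nth 0%N (canon_set q1 q2) i in
     if j == 0 :> nat then gamma ^ (s%:Z * u)
     else if j == 1 :> nat then gamma ^ (s%:Z * v)
     else 1).

Definition in_E (q1 q2 : nat) (e : int) : bool :=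
  ~~ (q1%:Z %| e)%Z && ~~ (q2%:Z %| e)%Z.

From mathcomp Require Import all_boot all_order all_algebra.
From mathcomp Require Import ring.
Set Implicit Arguments.
Unset Strict Implicit.
Unset Printing Implicit Defensive.
Import GRing.Theory Num.Theory.
Local Open Scope ring_scope.

(* Put x = gamma^s01 and y = gamma^s10.  By the Chinese remainder theorem x
   and y are primitive roots of unity of orders p2^a2 and p1^a1, and
   gamma^s11 = x y.  Hence u in E means x^u <> 1 <> y^u, u <> v (mod m) means
   (x^u, y^u) <> (x^v, y^v), and the rows of A are (z^u, z^v, 1) for
   z = x, y, x y.
   A decoding polynomial c1 X^e1 + c2 X^e2 + c3 X^e3, divided by X^e3, is a
   trinomial c1 X^u + c2 X^v + c3 vanishing at x, y and x y with
   c1 + c2 + c3 = 1, i.e. a kernel vector of A of mass 1; linear identities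
   between these four equations force u, v in E and u <> v (mod m).
   Conversely, for u, v in E with u <> v (mod m) the same identities show that
   every nonzero kernel vector (d1, d2, d3) of A has d1 + d2 + d3 <> 0, and
   rescaling the trinomial (with exponents reduced mod m) gives a decoding
   polynomial. *)

Section IntPowers.
Variable F : fieldType.
Implicit Types (z : F) (n : nat) (k l : int).

Lemma expr_eq1_neq0 n z : (0 < n)%N -> z ^+ n = 1 -> z != 0.
Proof.
by move=> n_gt0; apply: contra_eq_neq => ->; rewrite expr0n gtn_eqF // eq_sym oner_eq0.
Qed.

Lemma prim_root_neq0 n z : n.-primitive_root z -> z != 0.
Proof.
by move=> z_prim; apply: expr_eq1_neq0 (prim_order_gt0 z_prim) (prim_expr_order z_prim).
Qed.

Lemma prim_expz_eq1 n z k : n.-primitive_root z -> (z ^ k == 1) = (n%:Z %| k)%Z.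
Proof.
move=> z_prim; case: k => k; first by rewrite dvdzE -(prim_order_dvd z_prim).
by rewrite NegzE -invr_expz invr_eq1 rpredN dvdzE -(prim_order_dvd z_prim).
Qed.

Lemma prim_expz_eq n z k l :
  n.-primitive_root z -> (z ^ k == z ^ l) = (n%:Z %| k - l)%Z.
Proof.
move=> z_prim; have z_neq0 := prim_root_neq0 z_prim.
rewrite -(prim_expz_eq1 _ z_prim) expfzDr // -invr_expz.
by apply/eqP/eqP => [->|/divr1_eq //]; rewrite divff ?expfz_neq0.
Qed.

Lemma expr_modz n z k : (0 < n)%N -> z ^+ n = 1 -> z ^+ `|(k %% n)%Z|%N = z ^ k.
Proof.
move=> n_gt0 zn1; have n_neq0 : n%:Z != 0 by rewrite eqz_nat -lt0n.
have z_neq0 := expr_eq1_neq0 n_gt0 zn1.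
have -> : z ^ k = (z ^+ n) ^ (k %/ n)%Z * z ^ (k %% n)%Z.
  by rewrite exprnP exprz_exp -expfzDr // [n%:Z * _]mulrC -divz_eq.
by rewrite zn1 exp1rz mul1r exprnP gez0_abs ?modz_ge0.
Qed.

End IntPowers.

Section FewMonomials.
Variable F : fieldType.
Implicit Type P : {poly F}.

Lemma nmonomials_le_support P (s : seq nat) :
  (forall i, i \notin s -> P`_i = 0) -> (nmonomials P <= size s)%N.
Proof.
move=> P_supp; rewrite /nmonomials -(mkseq_nth 0 P) /mkseq count_map -size_filter.
apply: uniq_leq_size => [|i]; first exact/filter_uniq/iota_uniq.
rewrite mem_filter => /andP[/= Pi_neq0 _].
by apply: contraR Pi_neq0 => /P_supp ->; rewrite eqxx.
Qed.

Lemma nmonomials_lt4P P : (nmonomials P < 4)%N ->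
  exists (c1 c2 c3 : F) (e1 e2 e3 : nat),
    forall z, P.[z] = c1 * z ^+ e1 + c2 * z ^+ e2 + c3 * z ^+ e3.
Proof.
pose S := [seq i <- index_iota 0 (size P) | P`_i != 0].
have size_S : size S = nmonomials P.
  rewrite size_filter /index_iota subn0 /nmonomials.
  by rewrite -[in RHS](mkseq_nth 0 P) count_map.
have P_S z : P.[z] = \sum_(i <- S) P`_i * z ^+ i.
  rewrite horner_coef big_filter big_mkord [RHS]big_mkcond /=.
  by apply: eq_bigr => i _; case: eqP => // ->; rewrite mul0r.
rewrite -size_S; case: S size_S P_S => [|i1 [|i2 [|i3 []]]] //= _ P_S _.
- by exists 0, 0, 0, 0%N, 0%N, 0%N => z; rewrite P_S big_nil !mul0r !addr0.
- by exists P`_i1, 0, 0, i1, 0%N, 0%N => z; rewrite P_S big_seq1 !mul0r !addr0.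
- exists P`_i1, P`_i2, 0, i1, i2, 0%N => z.
  by rewrite P_S !big_cons big_nil mul0r !addr0.
- exists P`_i1, P`_i2, P`_i3, i1, i2, i3 => z.
  by rewrite P_S !big_cons big_nil addr0 addrA.
Qed.

End FewMonomials.

Section VanishingTrinomial.
Variable F : fieldType.

(* With x1 = x ^ u, x2 = x ^ v, y1 = y ^ u, y2 = y ^ v, this says that the
   trinomial d1 X^u + d2 X^v + d3 vanishes at x, y and x * y. *)
Definition trinomial_vanishes (d1 d2 d3 x1 x2 y1 y2 : F) : Prop :=
  [/\ d1 * x1 + d2 * x2 + d3 = 0, d1 * y1 + d2 * y2 + d3 = 0
    & d1 * (x1 * y1) + d2 * (x2 * y2) + d3 = 0].

Lemma trinomial_vanishes_swap (d1 d2 d3 x1 x2 y1 y2 : F) :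
  trinomial_vanishes d1 d2 d3 x1 x2 y1 y2 -> trinomial_vanishes d2 d1 d3 x2 x1 y2 y1.
Proof. by case=> hx hy hxy; split; rewrite [d2 * _ + _]addrC. Qed.

Lemma trinomial_vanishes_swapxy (d1 d2 d3 x1 x2 y1 y2 : F) :
  trinomial_vanishes d1 d2 d3 x1 x2 y1 y2 -> trinomial_vanishes d1 d2 d3 y1 y2 x1 x2.
Proof. by case=> hx hy hxy; split; rewrite // [y1 * _]mulrC [y2 * _]mulrC. Qed.

Section MassOne.
Variables d1 d2 d3 x1 x2 y1 y2 : F.
Hypotheses (van : trinomial_vanishes d1 d2 d3 x1 x2 y1 y2) (mass1 : d1 + d2 + d3 = 1).

Lemma trinomial_vanishes_neq1 : y2 != 0 -> x1 != 1.
Proof.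
case: van => hx hy hxy; apply: contraNneq => x1_1.
have : y2 * ((d1 + d2 + d3) - (d1 * x1 + d2 * x2 + d3))
       = (d1 * y1 + d2 * y2 + d3) - (d1 * (x1 * y1) + d2 * (x2 * y2) + d3).
  by rewrite x1_1; ring.
by rewrite mass1 hx hy hxy subr0 mulr1 subrr => ->.
Qed.

Lemma trinomial_vanishes_points_neq : x1 != 0 -> (x1 != x2) || (y1 != y2).
Proof.
case: van => hx hy hxy; rewrite -negb_and; apply: contraNN => /andP[/eqP x12 /eqP y12].
have : x1 * ((d1 + d2 + d3) - (d1 * y1 + d2 * y2 + d3))
       = (d1 * x1 + d2 * x2 + d3) - (d1 * (x1 * y1) + d2 * (x2 * y2) + d3).
  by rewrite -x12 -y12; ring.
by rewrite mass1 hx hy hxy subr0 mulr1 subrr => ->.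
Qed.

End MassOne.

Lemma trinomial_vanishes_mass0 (d1 d2 d3 x1 x2 y1 y2 : F) :
  trinomial_vanishes d1 d2 d3 x1 x2 y1 y2 -> d1 + d2 + d3 = 0 ->
  x1 != 1 -> x2 != 1 -> y1 != 1 -> (x1 != x2) || (y1 != y2) ->
  (d1, d2, d3) = (0, 0, 0).
Proof.
case=> hx hy hxy mass0 x1_neq1 x2_neq1 y1_neq1 pts_neq.
have ex : d1 * (x1 - 1) + d2 * (x2 - 1) = 0.
  by rewrite -[RHS](subrr 0) -{1}hx -mass0; ring.
have ey : d1 * (y1 - 1) + d2 * (y2 - 1) = 0.
  by rewrite -[RHS](subrr 0) -{1}hy -mass0; ring.
have exy : d1 * (x1 - 1) * (y1 - y2) = 0.
  have -> : d1 * (x1 - 1) * (y1 - y2) =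
    (d1 * (x1 * y1) + d2 * (x2 * y2) + d3) - (d1 * x1 + d2 * x2 + d3)
    - (d1 * y1 + d2 * y2 + d3) + (d1 + d2 + d3)
    - (y2 - 1) * (d1 * (x1 - 1) + d2 * (x2 - 1)) by ring.
  by rewrite hx hy hxy mass0 ex; ring.
suff d1_0 : d1 = 0.
  move: ex; rewrite d1_0 mul0r add0r => /eqP; rewrite mulf_eq0 subr_eq0.
  rewrite (negbTE x2_neq1) orbF => /eqP d2_0.
  by move: mass0; rewrite d1_0 d2_0 !add0r => ->.
move/eqP: exy; rewrite !mulf_eq0 !subr_eq0 (negbTE x1_neq1) orbF.
case/orP=> [/eqP //|/eqP y12]; move: pts_neq; rewrite y12 eqxx orbF => x12.
have d12_0 : d1 + d2 = 0.
  move: ey; rewrite -y12 -mulrDl => /eqP; rewrite mulf_eq0 subr_eq0.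
  by rewrite (negbTE y1_neq1) orbF => /eqP.
apply/eqP; move/eqP: ex.
have -> : d1 * (x1 - 1) + d2 * (x2 - 1) = d1 * (x1 - x2) + (d1 + d2) * (x2 - 1) by ring.
by rewrite d12_0 mul0r addr0 mulf_eq0 subr_eq0 (negbTE x12) orbF.
Qed.

End VanishingTrinomial.

Section PointMatrix.
Variable F : fieldType.

Definition pts_mx (x1 x2 y1 y2 : F) : 'M[F]_3 :=
  \matrix_(i < 3, j < 3)
    nth 0 (nth [::] [:: [:: x1; x2; 1]; [:: y1; y2; 1]; [:: x1 * y1; x2 * y2; 1]] i) j.

Lemma det_pts_mx_eq0 (x1 x2 y1 y2 : F) :
  \det (pts_mx x1 x2 y1 y2) = 0 <->
  exists d1 d2 d3 : F,
    (d1, d2, d3) != (0, 0, 0) /\ trinomial_vanishes d1 d2 d3 x1 x2 y1 y2.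
Proof.
pose i0 : 'I_3 := ord0; pose i1 : 'I_3 := lift ord0 ord0.
pose i2 : 'I_3 := lift ord0 (lift ord0 ord0).
have mulmx_trE (w : 'rV[F]_3) j :
    (w *m (pts_mx x1 x2 y1 y2)^T) 0 j =
    w 0 i0 * pts_mx x1 x2 y1 y2 j i0 + w 0 i1 * pts_mx x1 x2 y1 y2 j i1
    + w 0 i2 * pts_mx x1 x2 y1 y2 j i2.
  by rewrite !mxE !big_ord_recl big_ord0 addr0 !mxE addrA.
rewrite -det_tr.
split=> [/eqP/det0P[w w_neq0 /rowP w_ker] | [d1 [d2 [d3 [d_neq0 van]]]]].
  exists (w 0 i0), (w 0 i1), (w 0 i2); split.
    apply: contra_neq w_neq0 => -[w0 w1 w2]; apply/rowP => j; rewrite mxE.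
    case: j => -[|[|[|//]]] ?; [rewrite -w0 | rewrite -w1 | rewrite -w2];
    by congr (w _ _); apply: val_inj.
  have := w_ker i0; have := w_ker i1; have := w_ker i2.
  rewrite !mulmx_trE !mxE /= !mulr1 => hxy hy hx.
  by split; [rewrite -hx|rewrite -hy|rewrite -hxy].
apply/eqP/det0P; exists (\row_j [:: d1; d2; d3]`_j).
  apply: contra_neq d_neq0 => /rowP w0.
  by have := w0 i0; have := w0 i1; have := w0 i2; rewrite !mxE /= => -> -> ->.
case: van => hx hy hxy; apply/rowP => j; rewrite mulmx_trE !mxE.
by case: j => -[|[|[|//]]] ? /=; rewrite mulr1.
Qed.

End PointMatrix.

Section SparseDecoding.
Variables (F : fieldType) (x y : F).

Definition decoding_at (P : {poly F}) : Prop :=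
  [/\ P.[x] = 0, P.[y] = 0, P.[x * y] = 0 & P.[1] = 1].

Definition singular_pair (u v : int) : Prop :=
  [/\ (x ^ u != 1) && (y ^ u != 1), (x ^ v != 1) && (y ^ v != 1),
      (x ^ u != x ^ v) || (y ^ u != y ^ v)
    & \det (pts_mx (x ^ u) (x ^ v) (y ^ u) (y ^ v)) = 0].

Lemma singular_pair_of_decoding (P : {poly F}) :
  x != 0 -> y != 0 -> decoding_at P -> (nmonomials P < 4)%N ->
  exists u v, singular_pair u v.
Proof.
move=> x_neq0 y_neq0 [Px Py Pxy P1] /nmonomials_lt4P[c1 [c2 [c3 [e1 [e2 [e3 P_E]]]]]].
pose u := e1%:Z - e3%:Z; pose v := e2%:Z - e3%:Z.
have shift (z : F) : z != 0 -> P.[z] = 0 -> c1 * z ^ u + c2 * z ^ v + c3 = 0.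
  move=> z_neq0; rewrite P_E => Pz; have ze3_neq0 := expf_neq0 e3 z_neq0.
  apply: (mulIf ze3_neq0); rewrite mul0r -Pz /u /v !expfzDr // -!invr_expz -!exprnP.
  by field.
have xy_neq0 : x * y != 0 by rewrite mulf_neq0.
have van : trinomial_vanishes c1 c2 c3 (x ^ u) (x ^ v) (y ^ u) (y ^ v).
  split; [exact: shift | exact: shift | rewrite -!exprzMl ?unitfE //; exact: shift].
have mass1 : c1 + c2 + c3 = 1 by rewrite -P1 P_E !expr1n !mulr1.
have mass1' : c2 + c1 + c3 = 1 by rewrite [c2 + c1]addrC.
have van' := trinomial_vanishes_swap van.
exists u, v; split.
- rewrite (trinomial_vanishes_neq1 van mass1) ?expfz_neq0 //.
  have vanxy := trinomial_vanishes_swapxy van.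
  by rewrite (trinomial_vanishes_neq1 vanxy mass1) ?expfz_neq0.
- rewrite (trinomial_vanishes_neq1 van' mass1') ?expfz_neq0 //.
  have vanxy' := trinomial_vanishes_swapxy van'.
  by rewrite (trinomial_vanishes_neq1 vanxy' mass1') ?expfz_neq0.
- exact: trinomial_vanishes_points_neq van mass1 (expfz_neq0 _ x_neq0).
apply/det_pts_mx_eq0; exists c1, c2, c3; split => //.
by apply: contra_eq_neq mass1 => -[-> -> ->]; rewrite !addr0 eq_sym oner_eq0.
Qed.

Lemma decoding_of_singular_pair (n : nat) (u v : int) :
  (0 < n)%N -> x ^+ n = 1 -> y ^+ n = 1 -> singular_pair u v ->
  exists P : {poly F}, decoding_at P /\ (nmonomials P < 4)%N.
Proof.
move=> n_gt0 xn1 yn1 [/andP[xu_neq1 yu_neq1] /andP[xv_neq1 _] pts_neq].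
have x_neq0 := expr_eq1_neq0 n_gt0 xn1; have y_neq0 := expr_eq1_neq0 n_gt0 yn1.
case/det_pts_mx_eq0=> [d1 [d2 [d3 [d_neq0 van]]]].
have mass_neq0 : d1 + d2 + d3 != 0.
  apply: contra_neq d_neq0 => mass0.
  exact: trinomial_vanishes_mass0 van mass0 xu_neq1 xv_neq1 yu_neq1 pts_neq.
pose eu := `|(u %% n)%Z|%N; pose ev := `|(v %% n)%Z|%N.
pose Q := d1 *: 'X^eu + d2 *: 'X^ev + d3%:P.
have Q_E (z : F) : z ^+ n = 1 -> Q.[z] = d1 * z ^ u + d2 * z ^ v + d3.
  by move=> zn1; rewrite !hornerE /eu /ev !expr_modz.
exists ((d1 + d2 + d3)^-1 *: Q); split; last first.
  apply: (@leq_ltn_trans (size [:: eu; ev; 0%N])) => //.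
  apply: nmonomials_le_support => i.
  rewrite coefZ !coefD !coefZ !coefXn coefC !inE.
  case/norP=> /negbTE-> /norP[/negbTE-> /negbTE->].
  by rewrite !mulr0 !addr0 mulr0.
case: van => hx hy hxy; have xyn1 : (x * y) ^+ n = 1 by rewrite exprMn xn1 yn1 mulr1.
split; rewrite hornerZ Q_E ?expr1n ?exp1rz ?mulr1 ?mulVf //.
- by rewrite hx mulr0.
- by rewrite hy mulr0.
- by rewrite !exprzMl ?unitfE // hxy mulr0.
Qed.

End SparseDecoding.

Lemma prim_root_expr_cofactor (F : fieldType) (n1 n2 s : nat) (z : F) :
  (n1 * n2).-primitive_root z -> (n1 %| s)%N -> coprime s n2 ->
  n2.-primitive_root (z ^+ s).
Proof.
move=> z_prim n1_s s_n2; have := exp_prim_root z_prim s.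
have n1_gt0 : (0 < n1)%N by have := prim_order_gt0 z_prim; rewrite muln_gt0 => /andP[].
by rewrite Gauss_gcdl // (gcdn_idPr n1_s) mulKn.
Qed.

Section CanonicalSet.
Variables (F : fieldType) (q1 q2 : nat) (g : F).
Hypotheses (q12 : coprime q1 q2) (g_prim : (q1 * q2).-primitive_root g).

Let x := g ^+ s_sig q1 q2 0 1.
Let y := g ^+ s_sig q1 q2 1 0.

Lemma s_sig_modl r1 r2 : s_sig q1 q2 r1 r2 = r1 %[mod q1].
Proof. by rewrite /s_sig modn_dvdm ?dvdn_mulr // chinese_modl. Qed.

Lemma s_sig_modr r1 r2 : s_sig q1 q2 r1 r2 = r2 %[mod q2].
Proof. by rewrite /s_sig modn_dvdm ?dvdn_mull // chinese_modr. Qed.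

Lemma s_sig01_prim_root : q2.-primitive_root x.
Proof.
apply: prim_root_expr_cofactor g_prim _ _; first by rewrite /dvdn s_sig_modl mod0n.
by rewrite -coprime_modl s_sig_modr coprime_modl coprime1n.
Qed.

Lemma s_sig10_prim_root : q1.-primitive_root y.
Proof.
apply: (@prim_root_expr_cofactor _ q2); first by rewrite mulnC.
  by rewrite /dvdn s_sig_modr mod0n.
by rewrite -coprime_modl s_sig_modl coprime_modl coprime1n.
Qed.

Lemma s_sig11_expr : g ^+ s_sig q1 q2 1 1 = x * y.
Proof.
rewrite -exprD; apply/eqP; rewrite (eq_prim_root_expr g_prim) chinese_remainder //.
rewrite -modnDm !s_sig_modl modnDm -(modnDm (s_sig _ _ 0 1)) !s_sig_modr modnDm.
by rewrite add0n addn0 !eqxx.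
Qed.

Lemma good_iff_decoding_at :
  good g q1 q2 <-> exists P : {poly F}, decoding_at x y P /\ (nmonomials P < 4)%N.
Proof.
rewrite /good /decoding_poly /canon_set.
split=> -[P [P_dec P_lt4]]; exists P; split=> //.
- case: P_dec => P_roots P1; split=> //; rewrite -?s_sig11_expr; apply: P_roots;
  by rewrite !inE eqxx ?orbT.
- case: P_dec => Px Py Pxy P1; split=> // s.
  by rewrite !inE => /or3P[]/eqP->; rewrite // s_sig11_expr.
Qed.

Lemma in_E_expz u : in_E q1 q2 u = (x ^ u != 1) && (y ^ u != 1).
Proof.
rewrite /in_E (prim_expz_eq1 _ s_sig01_prim_root).
by rewrite (prim_expz_eq1 _ s_sig10_prim_root) andbC.
Qed.

Lemma eqz_mod_expz u v :
  (u == v %[mod (q1 * q2)%N])%Z = (x ^ u == x ^ v) && (y ^ u == y ^ v).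
Proof.
rewrite eqz_mod_dvd PoszM (Gauss_dvdz _ (q12 : coprimez q1 q2)).
rewrite (prim_expz_eq _ _ s_sig01_prim_root).
by rewrite (prim_expz_eq _ _ s_sig10_prim_root) andbC.
Qed.

Lemma matA_pts_mx u v : matA g q1 q2 u v = pts_mx (x ^ u) (x ^ v) (y ^ u) (y ^ v).
Proof.
have x_neq0 := prim_root_neq0 s_sig01_prim_root.
have y_neq0 := prim_root_neq0 s_sig10_prim_root.
apply/matrixP => i j; rewrite !mxE /canon_set.
have powE (s : nat) k : g ^ (s%:Z * k) = (g ^+ s) ^ k by rewrite exprnP exprz_exp.
case: i j => [[|[|[|//]]] ?] [[|[|[|//]]] ?] /=;
  by rewrite ?powE ?s_sig11_expr ?exprzMl ?unitfE.
Qed.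

Theorem good_iff_singular_matA :
  good g q1 q2 <->
  exists u v : int,
    [/\ in_E q1 q2 u, in_E q1 q2 v, (u != v %[mod (q1 * q2)%N])%Z &
        \det (matA g q1 q2 u v) = 0].
Proof.
have x_prim := s_sig01_prim_root; have y_prim := s_sig10_prim_root.
apply: (iff_trans good_iff_decoding_at).
split=> [[P [P_dec P_lt4]] | [u [v [Eu Ev uv D]]]].
  have [u [v [Eu Ev uv D]]] := singular_pair_of_decoding
    (prim_root_neq0 x_prim) (prim_root_neq0 y_prim) P_dec P_lt4.
  by exists u, v; rewrite !in_E_expz eqz_mod_expz negb_and matA_pts_mx.
apply: (decoding_of_singular_pair (n := q1 * q2) (u := u) (v := v)).
- by rewrite muln_gt0 -(muln_gt0 q1 q2) (prim_order_gt0 g_prim).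
- by rewrite mulnC exprM (prim_expr_order x_prim) expr1n.
- by rewrite exprM (prim_expr_order y_prim) expr1n.
by move: Eu Ev uv D; rewrite !in_E_expz eqz_mod_expz negb_and matA_pts_mx.
Qed.

End CanonicalSet.

Theorem lemma5 (p1 p2 a1 a2 t : nat) (F : finFieldType) (gamma : F) :
  prime p1 -> prime p2 -> (2 < p1)%N -> (2 < p2)%N -> p1 != p2 ->
  (0 < a1)%N -> (0 < a2)%N ->
  is_ord_mod (p1 ^ a1 * p2 ^ a2) 2 t ->
  #|F| = (2 ^ t)%N ->
  (p1 ^ a1 * p2 ^ a2)%N.-primitive_root gamma ->
  good gamma (p1 ^ a1) (p2 ^ a2) <->
  exists u v : int,
    [/\ in_E (p1 ^ a1) (p2 ^ a2) u, in_E (p1 ^ a1) (p2 ^ a2) v,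
        (u != v %[mod (p1 ^ a1 * p2 ^ a2)%N])%Z &
        \det (matA gamma (p1 ^ a1) (p2 ^ a2) u v) = 0].
Proof.
move=> p1_prime p2_prime _ _ p1_neq_p2 _ _ _ _ gamma_prim.
apply: good_iff_singular_matA gamma_prim.
by rewrite coprimeXl // coprime_sym coprimeXl // prime_coprime // dvdn_prime2 // eq_sym.
Qed.
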